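(* If $G$ is a graph with $\operatorname{box}(G)=b$, then $G$ contains a simple cycle of length at least $b-3$.
   Context: The boxicity $\operatorname{box}(G)$ is the minimum $b$ such that $G$ is the intersection graph of axis-parallel boxes in $\mathbb{R}^b$ (products of $b$ closed intervals), one box per vertex. *)

From Stdlib Require Import Reals.
From mathcomp Require Import all_boot.
Set Implicit Arguments. Unset Strict Implicit. Unset Printing Implicit Defensive.

(* A finite simple graph: vertex set a finType T, edge relation e : rel T,
   symmetric and irreflexive (these are hypotheses of the theorem). *)

Definition box_rep (T : finType) (e : rel T) (b : nat)
  (lo hi : T -> 'I_b -> R) : Prop :=
  (forall v i, Rle (lo v i) (hi v i)) /\
  (forall u v, u <> v ->
     (e u v <-> forall i : 'I_b, Rle (lo u i) (hi v i) /\ Rle (lo v i) (hi u i))).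

Definition has_box_rep (T : finType) (e : rel T) (b : nat) : Prop :=
  exists lo hi : T -> 'I_b -> R, @box_rep T e b lo hi.

Definition boxicity_eq (T : finType) (e : rel T) (b : nat) : Prop :=
  has_box_rep e b /\ (forall b', has_box_rep e b' -> b <= b').

Definition simple_cycle (T : finType) (e : rel T) (s : seq T) : Prop :=
  [/\ uniq s, 3 <= size s & cycle e s].

(* Take a normal spanning forest of G: a rooted forest in which every edge joins
   a vertex to one of its ancestors. An edge spanning more than W levels closes,
   with the tree path between its ends, a cycle of length more than W + 1.
   Otherwise G is the intersection graph of boxes in dimension m + 2 whenever
   m > W (or m = 0 and W = 1): one coordinate carries nested intervals coding the
   ancestor relation, one carries [depth, depth + W], and for each colour k < m
   (depths taken mod m) the vertices of colour k get the point of their depth,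
   while any other vertex v gets [depth v, max depth] if it has a non-adjacent
   ancestor of colour k within W levels and [0, max depth] otherwise. With
   W = max(1, b - 5) and m = b - 3 (m = 0 if b = 4) this is dimension b - 1. *)

From Stdlib Require Import Reals.
From mathcomp Require Import all_boot zify.
Set Implicit Arguments. Unset Strict Implicit. Unset Printing Implicit Defensive.

Lemma eq_modn_near m a b : a = b %[mod m] -> a < b + m -> b < a + m -> a = b.
Proof.
wlog le_ab : a b / a <= b => [wlog_ab|].
  by case: (leqP a b) => [|/ltnW] ? ? ? ?; [|symmetry]; apply: wlog_ab.
move=> /eqP; rewrite eq_sym eqn_mod_dvd // => m_dvd _ lt_b.
case: (posnP (b - a)) => [|/dvdn_leq/(_ m_dvd)]; lia.
Qed.

Lemma chord_simple_cycle (T : finType) (e : rel T) (x : T) (s : seq T) i :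
  path e x s -> uniq (x :: s) -> i.+1 < size s -> e (nth x s i.+1) x ->
  simple_cycle e (x :: take i.+2 s).
Proof.
move=> e_xs uniq_xs lt_i_s e_chord; split.
- exact: (take_uniq i.+3 uniq_xs).
- by rewrite /= size_takel.
- rewrite /= rcons_path {2}(take_nth x lt_i_s) last_rcons e_chord andbT.
  by move: e_xs; rewrite -{1}(cat_take_drop i.+2 s) cat_path => /andP[].
Qed.

Lemma has_box_rep_nat (T : finType) (e : rel T) d (lo hi : T -> 'I_d -> nat) :
  (forall v i, lo v i <= hi v i) ->
  (forall u v, u <> v -> e u v <-> forall i, lo u i <= hi v i /\ lo v i <= hi u i) ->
  has_box_rep e d.
Proof.
move=> lo_hi meet_iff; exists (fun v i => INR (lo v i)), (fun v i => INR (hi v i)).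
split=> [v i|u v uv]; first exact/le_INR/leP.
rewrite meet_iff //; split=> meet i; have [? ?] := meet i.
  by split; apply/le_INR/leP.
by split; apply/leP/INR_le.
Qed.

Section AncestorLists.
Variables (T : finType) (S : {set T}) (anc : T -> seq T).
Hypothesis anc_cons : forall x p s, x \in S -> anc x = p :: s -> anc p = s.
Hypothesis anc_sub : forall x, x \in S -> {subset anc x <= S}.

Lemma anc_nth i x x0 : x \in S -> i < size (anc x) ->
  anc (nth x0 (anc x) i) = drop i.+1 (anc x).
Proof.
elim: i x => [|i IHi] x xS; case anc_x: (anc x) => [|p s] //= lt_i.
  by rewrite (anc_cons xS anc_x) drop0.
have pS : p \in S by apply: (anc_sub xS); rewrite anc_x mem_head.
by have := IHi p pS; rewrite (anc_cons xS anc_x) => ->.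
Qed.

Lemma anc_of_anc x y : x \in S -> y \in anc x ->
  anc y = drop (index y (anc x)).+1 (anc x).
Proof. by move=> xS yA; rewrite -{1}(nth_index y yA) anc_nth ?index_mem. Qed.

Lemma depth_of_anc x y : x \in S -> y \in anc x ->
  size (anc y) + (index y (anc x)).+1 = size (anc x).
Proof.
by move=> xS yA; rewrite (anc_of_anc xS yA) size_drop subnK // index_mem.
Qed.

Lemma root_of_anc x y : x \in S -> y \in anc x -> last y (anc y) = last x (anc x).
Proof.
move=> xS yA; have lt_y : index y (anc x) < size (anc x) by rewrite index_mem.
rewrite (anc_of_anc xS yA) -[in RHS](cat_take_drop (index y (anc x)) (anc x)).
by rewrite last_cat (drop_nth y lt_y) nth_index.
Qed.

Lemma anc_depth_inj x u w : x \in S -> u \in anc x -> w \in anc x ->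
  size (anc u) = size (anc w) -> u = w.
Proof.
move=> xS uA wA same_depth.
have := depth_of_anc xS uA; rewrite same_depth -(depth_of_anc xS wA).
move=> /addnI [] same_index.
by rewrite -(nth_index u uA) -(nth_index u wA) same_index.
Qed.

End AncestorLists.

Section NormalForest.
Variables (T : finType) (e : rel T).

Record normal_forest (S : {set T}) (anc : T -> seq T) (lo hi : T -> nat) : Prop :=
  NormalForest {
    nf_path : forall x, x \in S -> path e x (anc x);
    nf_uniq : forall x, x \in S -> uniq (x :: anc x);
    nf_sub : forall x, x \in S -> {subset anc x <= S};
    nf_anc_cons : forall x p s, x \in S -> anc x = p :: s -> anc p = s;
    nf_edge : forall x y, x \in S -> y \in S -> e x y -> (x \in anc y) || (y \in anc x);
    nf_interval : forall x y, x \in S -> y \in S ->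
      (lo x <= hi y) && (lo y <= hi x) = [|| x == y, x \in anc y | y \in anc x]
  }.

Lemma anc_edge_simple_cycle S anc lo hi u v : normal_forest S anc lo hi ->
  v \in S -> e u v -> u \in anc v -> 0 < index u (anc v) ->
  exists2 s, simple_cycle e s & size s = (index u (anc v)).+2.
Proof.
move=> F vS euv uA; case idx: (index u (anc v)) => [|i] // _.
have lt_i : i.+1 < size (anc v) by rewrite -idx index_mem.
exists (v :: take i.+2 (anc v)); last by rewrite /= size_takel.
by apply: chord_simple_cycle (nf_path F vS) (nf_uniq F vS) lt_i _; rewrite -idx nth_index.
Qed.

Hypotheses (e_sym : symmetric e) (e_irr : irreflexive e).

Section AddRoot.
Variables (S : {set T}) (rho : T -> nat) (r : T).
Hypotheses (rS : r \in S) (r_min : {in S, forall y, rho r <= rho y}).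
Variables (anc' : T -> seq T) (lo' hi' : T -> nat).
Hypothesis F' : normal_forest (S :\ r) anc' lo' hi'.
Hypothesis root_adj : {in S :\ r, forall x, e r x -> e r (last x (anc' x))}.
Hypothesis root_min : {in S :\ r, forall x,
  ~~ e r (last x (anc' x)) -> rho (last x (anc' x)) <= rho x}.

Let hangs y := e r (last y (anc' y)).
(* The trees hung below [r] are shifted into the interval [K, K + K] of [r]. *)
Let K := (\max_(y in S :\ r) hi' y).+1.
Let anc y := if y == r then [::] else if hangs y then rcons (anc' y) r else anc' y.
Let lo y := if y == r then K else lo' y + hangs y * K.
Let hi y := if y == r then K + K else hi' y + hangs y * K.

Let ancE y : y \in S :\ r -> anc y = if hangs y then rcons (anc' y) r else anc' y.
Proof. by rewrite in_setD1 /anc => /andP[/negbTE ->]. Qed.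

Let r_notin_anc' y : y \in S :\ r -> r \notin anc' y.
Proof. by move=> yS'; apply/negP => /(nf_sub F' yS'); rewrite in_setD1 eqxx. Qed.

Let mem_anc y z : y \in S :\ r -> z != r -> (z \in anc y) = (z \in anc' y).
Proof.
by move=> yS' zr; rewrite ancE //; case: hangs; rewrite ?mem_rcons ?in_cons ?(negbTE zr).
Qed.

Let r_in_anc y : y \in S :\ r -> (r \in anc y) = hangs y.
Proof.
move=> yS'; rewrite ancE //; case: hangs; first by rewrite mem_rcons mem_head.
exact/negbTE/r_notin_anc'.
Qed.

Let hangs_anc y z : y \in S :\ r -> z \in anc' y -> hangs z = hangs y.
Proof.
by move=> yS' zA; rewrite /hangs (root_of_anc (nf_anc_cons F') (nf_sub F') yS' zA).
Qed.

Let hi'_lt_K y : y \in S :\ r -> hi' y < K.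
Proof. by move=> yS'; rewrite ltnS; apply: (leq_bigmax_cond (F := hi')). Qed.

Let lo'_le_hi' y : y \in S :\ r -> lo' y <= hi' y.
Proof. by move=> yS'; have := nf_interval F' yS' yS'; rewrite eqxx => /andP[]. Qed.

Let add_root_path x : x \in S -> path e x (anc x).
Proof.
case: (eqVneq x r) => [-> | xr] xS; first by rewrite /anc eqxx.
have xS' : x \in S :\ r by rewrite in_setD1 xr.
rewrite ancE //; case hx: (hangs x); last exact: (nf_path F' xS').
by rewrite rcons_path (nf_path F' xS') e_sym.
Qed.

Let add_root_uniq x : x \in S -> uniq (x :: anc x).
Proof.
case: (eqVneq x r) => [-> | xr] xS; first by rewrite /anc eqxx.
have xS' : x \in S :\ r by rewrite in_setD1 xr.
rewrite ancE //; case: (hangs x); last exact: (nf_uniq F' xS').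
rewrite -rcons_cons rcons_uniq (nf_uniq F' xS') andbT in_cons negb_or eq_sym xr.
exact: r_notin_anc'.
Qed.

Let add_root_sub x : x \in S -> {subset anc x <= S}.
Proof.
case: (eqVneq x r) => [-> | xr] xS z; first by rewrite /anc eqxx.
have xS' : x \in S :\ r by rewrite in_setD1 xr.
have sub' : z \in anc' x -> z \in S by move/(nf_sub F' xS'); rewrite in_setD1 => /andP[].
rewrite ancE //; case: (hangs x) => //.
by rewrite mem_rcons in_cons => /orP[/eqP -> // | /sub'].
Qed.

Let add_root_anc_cons x p s : x \in S -> anc x = p :: s -> anc p = s.
Proof.
case: (eqVneq x r) => [-> | xr] xS; first by rewrite /anc eqxx.
have xS' : x \in S :\ r by rewrite in_setD1 xr.
rewrite ancE //; case anc'_x: (anc' x) => [|q s'].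
  by case: (hangs x) => // -[<- <-]; rewrite /anc eqxx.
have qS' : q \in S :\ r by apply: (nf_sub F' xS'); rewrite anc'_x mem_head.
have hangs_q : hangs q = hangs x by apply: hangs_anc xS' _; rewrite anc'_x mem_head.
have anc_q : anc q = if hangs x then rcons s' r else s'.
  by rewrite ancE // hangs_q (nf_anc_cons F' xS' anc'_x).
by case: (hangs x) anc_q => anc_q [<- <-].
Qed.

Let add_root_edge x y : x \in S -> y \in S -> e x y -> (x \in anc y) || (y \in anc x).
Proof.
have hang_nbr z : z \in S -> e r z -> r \in anc z.
  move=> zS erz; have zS' : z \in S :\ r.
    by rewrite in_setD1 zS andbT; apply: contraTneq erz => ->; rewrite e_irr.
  by rewrite r_in_anc //; apply: root_adj.
case: (eqVneq x r) => [-> | xr] xS yS exy; first by rewrite hang_nbr.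
case: (eqVneq y r) exy => [-> exr | yr exy]; first by rewrite hang_nbr ?orbT // e_sym.
have [xS' yS'] : x \in S :\ r /\ y \in S :\ r by rewrite !in_setD1 xr yr.
by rewrite !mem_anc //; exact: (nf_edge F' xS' yS' exy).
Qed.

Let add_root_interval x y : x \in S -> y \in S ->
  (lo x <= hi y) && (lo y <= hi x) = [|| x == y, x \in anc y | y \in anc x].
Proof.
have interval_r z : z \in S :\ r ->
    (K <= hi' z + hangs z * K) && (lo' z + hangs z * K <= K + K) = hangs z.
  by move=> zS'; have := hi'_lt_K zS'; have := lo'_le_hi' zS'; case: hangs => /=; lia.
case: (eqVneq x r) => [-> | xr] xS; case: (eqVneq y r) => [-> | yr] yS.
- by rewrite /lo /hi eqxx; lia.
- have yS' : y \in S :\ r by rewrite in_setD1 yr.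
  by rewrite /lo /hi eqxx (negbTE yr) r_in_anc // /anc eqxx in_nil /= orbF interval_r.
- have xS' : x \in S :\ r by rewrite in_setD1 xr.
  by rewrite /lo /hi eqxx (negbTE xr) r_in_anc // /anc eqxx in_nil /= andbC interval_r.
have [xS' yS'] : x \in S :\ r /\ y \in S :\ r by rewrite !in_setD1 xr yr.
rewrite /lo /hi (negbTE xr) (negbTE yr) !mem_anc //.
case: (eqVneq (hangs x) (hangs y)) => [-> | hangs_xy].
  by rewrite !leq_add2r (nf_interval F' xS' yS').
have -> : [|| x == y, x \in anc' y | y \in anc' x] = false.
  apply/negbTE; apply: contra hangs_xy.
  by case/or3P=> [/eqP -> | /(hangs_anc yS') -> | /(hangs_anc xS') ->].
have := hi'_lt_K xS'; have := hi'_lt_K yS'.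
by case: (hangs x) (hangs y) hangs_xy => [] [] //= _; lia.
Qed.

Let add_root_root_min x : x \in S -> rho (last x (anc x)) <= rho x.
Proof.
case: (eqVneq x r) => [-> | xr] xS; first by rewrite /anc eqxx.
have xS' : x \in S :\ r by rewrite in_setD1 xr.
rewrite ancE //; case hx: (hangs x); first by rewrite last_rcons r_min.
exact: (root_min xS' (negbT hx)).
Qed.

Lemma add_root_normal_forest : exists anc lo hi,
  normal_forest S anc lo hi /\ {in S, forall x, rho (last x (anc x)) <= rho x}.
Proof.
exists anc, lo, hi; split; last exact: add_root_root_min.
split; [exact: add_root_path | exact: add_root_uniq | exact: add_root_sub |
  exact: add_root_anc_cons | exact: add_root_edge | exact: add_root_interval].
Qed.

End AddRoot.

Lemma normal_forest_exists (S : {set T}) (rho : T -> nat) : exists anc lo hi,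
  normal_forest S anc lo hi /\ {in S, forall x, rho (last x (anc x)) <= rho x}.
Proof.
move: {2}#|S| (leqnn #|S|) => n; elim: n S rho => [|n IHn] S rho card_S;
    have [-> | [x0 x0S]] := set_0Vmem S.
1,3: by exists (fun=> [::]), (fun=> 0), (fun=> 0); split=> [|x]; [split=> x|]; rewrite in_set0.
  by move: card_S; rewrite (cardsD1 x0) x0S.
pose r := [arg min_(x < x0 in S) rho x].
have [rS r_min] : r \in S /\ {in S, forall y, rho r <= rho y} by rewrite /r; case: arg_minnP.
(* Under [rho'], a tree of the forest of [S :\ r] containing a neighbour of [r]
   is rooted at a neighbour of [r], so it can be hung below [r]. *)
pose rho' y := if e r y then 0 else (rho y).+1.
have card_S' : #|S :\ r| <= n by move: card_S; rewrite (cardsD1 r S) rS.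
have [anc' [lo' [hi' [F' root'_min]]]] := IHn (S :\ r) rho' card_S'.
by apply: (add_root_normal_forest rS r_min F') => x /root'_min;
  rewrite /rho'; case: (e r (last x (anc' x))); case: (e r x).
Qed.

End NormalForest.

Section ColourBox.
Variables (T : finType) (e : rel T).
Hypothesis e_sym : symmetric e.
Variables (anc : T -> seq T) (lo0 hi0 : T -> nat).
Hypothesis F : normal_forest e [set: T] anc lo0 hi0.
Variables W m d : nat.
Hypothesis enough_colours : W < m \/ m = 0 /\ W <= 1.
Hypothesis dim_ge : m.+2 <= d.

Local Notation depth x := (size (anc x)).
Let N := \max_(w : T) depth w.

Hypothesis short_edges : forall u v, e u v -> u \in anc v -> depth v <= depth u + W.

Definition close_nonneighbour k v :=
  has (fun u => [&& depth u %% m == k, depth v <= depth u + W & ~~ e u v]) (anc v).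

Definition colour_box_lo v j :=
  match j with
  | 0 => lo0 v
  | 1 => depth v
  | k.+2 => if (k < m) && ((depth v %% m == k) || close_nonneighbour k v) then depth v else 0
  end.

Definition colour_box_hi v j :=
  match j with
  | 0 => hi0 v
  | 1 => depth v + W
  | k.+2 => if k < m then (if depth v %% m == k then depth v else N) else 0
  end.

Let depth_anc u v : u \in anc v -> depth u + (index u (anc v)).+1 = depth v.
Proof. exact: (depth_of_anc (nf_anc_cons F) (nf_sub F) (in_setT v)). Qed.

Let depth_le_N x : depth x <= N.
Proof. exact: (@leq_bigmax T (fun w => depth w) x). Qed.

Let tree_interval u v :
  (lo0 u <= hi0 v) && (lo0 v <= hi0 u) = [|| u == v, u \in anc v | v \in anc u].
Proof. exact: (nf_interval F (in_setT u) (in_setT v)). Qed.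

Let close_colour_unique v u u' : W < m -> u \in anc v -> u' \in anc v ->
  depth v <= depth u + W -> depth v <= depth u' + W -> depth u = depth u' %[mod m] ->
  u = u'.
Proof.
move=> Wm uA u'A close_u close_u' same_colour.
apply: (anc_depth_inj (nf_anc_cons F) (nf_sub F) (in_setT v) uA u'A).
have [depth_uv depth_u'v] := (depth_anc uA, depth_anc u'A).
by apply: eq_modn_near same_colour _ _; lia.
Qed.

Let close_anc_colour u v : W < m -> u \in anc v -> depth v <= depth u + W ->
  (depth u == depth v %[mod m]) = false.
Proof.
move=> Wm uA close_uv; have depth_uv := depth_anc uA.
apply/negbTE/eqP => same_colour; suff : depth u = depth v by lia.
by apply: eq_modn_near same_colour _ _; lia.
Qed.

Lemma colour_box_lo_le_hi v j : colour_box_lo v j <= colour_box_hi v j.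
Proof.
case: j => [|[|k]] /=.
- by have := tree_interval v v; rewrite eqxx => /andP[].
- exact: leq_addr.
- case: (k < m) => //=; case: eqP => //= _; case: ifP => // _; exact: depth_le_N.
Qed.

Lemma colour_box_meet_edge u v : e u v -> u \in anc v -> forall j,
  colour_box_lo u j <= colour_box_hi v j /\ colour_box_lo v j <= colour_box_hi u j.
Proof.
move=> euv uA j; have depth_uv := depth_anc uA; have close_uv := short_edges euv uA.
case: j => [|[|k]] /=.
- by have := tree_interval u v; rewrite uA orbT => /andP[].
- by split; lia.
case: (ltnP k m) => [km | //]; have Wm : W < m by case: enough_colours; lia.
have [le_u le_v] := (depth_le_N u, depth_le_N v).
case cu: (depth u %% m == k); case cv: (depth v %% m == k) => /=.
- by move: (close_anc_colour Wm uA close_uv); rewrite (eqP cu) (eqP cv) eqxx.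
- suff -> : close_nonneighbour k v = false by [].
  apply/negbTE/hasPn => u' u'A; apply/negP => /and3P[cu' close_u' neu'].
  have uu' : u = u'.
    by apply: (close_colour_unique Wm uA u'A close_uv close_u'); rewrite (eqP cu) (eqP cu').
  by rewrite -uu' euv in neu'.
- by case: ifP; split; lia.
- by case: ifP; case: ifP; split; lia.
Qed.

Lemma colour_box_separate u v : u \in anc v -> ~~ e u v -> exists j : 'I_d,
  ~ (colour_box_lo u j <= colour_box_hi v j /\ colour_box_lo v j <= colour_box_hi u j).
Proof.
move=> uA neuv; have depth_uv := depth_anc uA.
have not_parent : 0 < index u (anc v).
  move: (nf_path F (in_setT v)); case: (anc v) uA => [|p s] //= _ /andP[evp _].
  by case: eqP => // pu; move: neuv; rewrite -pu e_sym evp.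
have d_gt1 : 1 < d by lia.
have [far | close] := ltnP (depth u + W) (depth v).
  by exists (Ordinal d_gt1) => /= -[_]; lia.
have Wm : W < m by case: enough_colours; lia.
pose k := depth u %% m.
have km : k < m by rewrite ltn_mod; lia.
have dk : k.+2 < d by lia.
have cv : (depth v %% m == k) = false by rewrite eq_sym close_anc_colour.
have close_v : close_nonneighbour k v by apply/hasP; exists u; rewrite // eqxx close.
by exists (Ordinal dk); rewrite /= km eqxx cv close_v /= => -[_]; lia.
Qed.

Lemma colour_box : has_box_rep e d.
Proof.
have d_gt0 : 0 < d by lia.
apply: (@has_box_rep_nat _ _ _ (fun v i => colour_box_lo v i) (fun v i => colour_box_hi v i)).
  by move=> v i; apply: colour_box_lo_le_hi.
move=> u v uv; split=> [euv i | meet].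
  case/orP: (nf_edge F (in_setT u) (in_setT v) euv) => [uA | vA].
    exact: colour_box_meet_edge.
  by rewrite e_sym in euv; have [] := colour_box_meet_edge euv vA i.
apply/negPn/negP => neuv; have [/= lo_uv lo_vu] := meet (Ordinal d_gt0).
have := tree_interval u v; rewrite lo_uv lo_vu => /esym/or3P[/eqP // | uA | vA].
  by have [j []] := colour_box_separate uA neuv; apply: meet.
rewrite e_sym in neuv; have [j []] := colour_box_separate vA neuv.
by have [] := meet j.
Qed.

End ColourBox.

Theorem theorem13 (T : finType) (e : rel T)
  (e_sym : symmetric e) (e_irr : irreflexive e) (b : nat) :
  boxicity_eq e b -> 3 < b ->
  exists s : seq T, simple_cycle e s /\ b - 3 <= size s.
Proof.
move=> [_ b_min] b_gt3.
have [anc [lo [hi [F _]]]] := normal_forest_exists e_sym e_irr [set: T] (fun=> 0).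
move W_def : (maxn 1 (b - 5)) => W.
have [/existsP[u /existsP[v /and3P[euv uA long]]] | /existsPn short] :=
  boolP [exists u, exists v, [&& e u v, u \in anc v & size (anc u) + W < size (anc v)]].
  have depth_uv := depth_of_anc (nf_anc_cons F) (nf_sub F) (in_setT v) uA.
  have [|s s_cycle size_s] := anc_edge_simple_cycle F (in_setT v) euv uA; first lia.
  by exists s; split=> //; lia.
suff /b_min : has_box_rep e (b - 1) by lia.
apply: (colour_box e_sym F (W := W) (m := if 4 < b then b - 3 else 0)).
- by case: ifP; lia.
- by case: ifP; lia.
move=> u v euv uA; move/existsPn/(_ v): (short u).
by rewrite euv uA /= -leqNgt.
Qed.
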